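(* For every graph $G$, $\operatorname{th}_{\operatorname{H}}(G)=|V(G)|$ if and only if $G$ contains none of $2K_2$, $K_2\cup\overline{K_2}$, $\overline{K_4}$ as an induced subgraph.
   Context: All graphs are finite, simple and undirected; $2K_2$ is two disjoint edges, $K_2\cup\overline{K_2}$ is an edge plus two isolated vertices, and $\overline{K_4}$ is four isolated vertices. Hopping color change rule: a blue vertex $v$ may force a white vertex $w$ to become blue if $v$ has not previously performed a force and every neighbor of $v$ is blue. For an initial blue set $B$, a chronological list of forces of $B$ is a sequence of such forces applied one at a time until no further force is possible; its underlying unordered set is a set of forces of $B$. $B$ is a hopping forcing set if some chronological list of forces of $B$ turns all vertices blue. For a set of forces $\mathcal F$ of $B$, let $\mathcal F^{(0)}=B$ and for $t\geq1$ let $\mathcal F^{(t)}$ be the set of vertices $w\notin U_{t-1}:=\bigcup_{i=0}^{t-1}\mathcal F^{(i)}$ for which there is $(v\to w)\in\mathcal F$ with $v\in U_{t-1}$ and all neighbors of $v$ in $U_{t-1}$. $\operatorname{pt}_{\operatorname{H}}(G;\mathcal F)$ is the least $t$ with $\bigcup_{i=0}^t\mathcal F^{(i)}=V(G)$ ($\infty$ if none); $\operatorname{pt}_{\operatorname{H}}(G;B)$ is the minimum over sets of forces $\mathcal F$ of $B$ ($\infty$ if $B$ is not a hopping forcing set). $\operatorname{th}_{\operatorname{H}}(G)=\min_{B\subseteq V(G)}\big(|B|+\operatorname{pt}_{\operatorname{H}}(G;B)\big)$. *)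

From mathcomp Require Import all_boot.
From Stdlib Require Import ClassicalEpsilon.
Set Implicit Arguments. Unset Strict Implicit. Unset Printing Implicit Defensive.

(* A finite simple graph: vertex type T : finType, adjacency e : rel T
   (symmetry/irreflexivity are hypotheses of the theorem). *)

Section Hopping.
Variables (T : finType) (e : rel T).

Definition can_force (blue used : {set T}) (v w : T) : bool :=
  [&& v \in blue, v \notin used, w \notin blue & [forall u, e v u ==> (u \in blue)]].

Fixpoint chron_list (blue used : {set T}) (s : seq (T * T)) : bool :=
  match s with
  | [::] => ~~ [exists v, exists w, can_force blue used v w]
  | (v, w) :: s' => can_force blue used v w && chron_list (w |: blue) (v |: used) s'
  end.

Definition is_chron_list (B : {set T}) (s : seq (T * T)) : bool := chron_list B set0 s.

Definition is_set_of_forces (B : {set T}) (F : {set T * T}) : Prop :=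
  exists s, is_chron_list B s /\ F = [set x in s].

Definition hopping_forcing_set (B : {set T}) : Prop :=
  exists s, is_chron_list B s /\ B :|: [set x.2 | x in s] = [set: T].

(* U B F t = \bigcup_{i=0}^t F^(i) *)
Fixpoint U (B : {set T}) (F : {set T * T}) (t : nat) : {set T} :=
  match t with
  | 0 => B
  | t'.+1 => let Ut := U B F t' in
      Ut :|: [set w | (w \notin Ut) &&
                [exists v, [&& (v, w) \in F, v \in Ut & [forall u, e v u ==> (u \in Ut)]]]]
  end.

(* k = |B| + t for some B, some set of forces F of B, and t with
   \bigcup_{i<=t} F^(i) = V.  The minimum of such k is
   min_B (|B| + min_F (least t ...)) = th_H(G). *)
Definition th_achievable (k : nat) : Prop :=
  exists (B : {set T}) (F : {set T * T}) (t : nat),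
    is_set_of_forces B F /\ U B F t = [set: T] /\ k = #|B| + t.

Definition th_achievableb (k : nat) : bool :=
  if excluded_middle_informative (th_achievable k) then true else false.

Lemma th_achievable_exists : exists k, th_achievableb k.
Proof.
exists (#|[set: T]| + 0); rewrite /th_achievableb.
case: excluded_middle_informative => // [[]].
exists [set: T], set0, 0; split; last by [].
exists [::]; split; last by apply/setP=> x; rewrite !inE.
rewrite /is_chron_list /=; apply/negP=> /existsP[v /existsP[w]].
by case/and4P=> _ _; rewrite inE.
Qed.

Definition th_H : nat := ex_minn th_achievable_exists.

Definition has_induced (H : rel 'I_4) : Prop :=
  exists f : 'I_4 -> T, injective f /\ forall x y, e (f x) (f y) = H x y.

End Hopping.

Definition twoK2 : rel 'I_4 := fun x y =>
  [|| (val x, val y) == (0, 1), (val x, val y) == (1, 0),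
      (val x, val y) == (2, 3) | (val x, val y) == (3, 2)].

Definition K2_coK2 : rel 'I_4 := fun x y =>
  ((val x, val y) == (0, 1)) || ((val x, val y) == (1, 0)).

Definition coK4 : rel 'I_4 := fun _ _ => false.

From mathcomp Require Import all_boot.
From Stdlib Require Import ClassicalEpsilon.
Set Implicit Arguments. Unset Strict Implicit. Unset Printing Implicit Defensive.

(** The obstruction common to $2K_2$, $K_2\cup\overline{K_2}$ and
    $\overline{K_4}$ is a pair of disjoint pairs {a, b}, {c, d} with no edge
    between them.  Given one, start from V \ {c, d}: a forces c and b forces d
    in the same round, so th_H <= (n - 2) + 1.  Without one, two vertices
    forced in the same round by distinct forcers v1, v2 (each vertex forces at
    most once) would give such pairs {v1, v2}, {w1, w2}, since all neighbours
    of v_i are already blue while w1, w2 are not; hence every round adds at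
    most one vertex and |B| + t >= n whenever round t finishes. *)

Definition two_pairs (p q : bool) : rel 'I_4 := fun x y =>
  match val x, val y with
  | 0, 1 | 1, 0 => p
  | 2, 3 | 3, 2 => q
  | _, _ => false
  end.

Lemma twoK2E : twoK2 =2 two_pairs true true.
Proof. by do 2![case=> [[|[|[|[|i]]]] //= ?]]. Qed.

Lemma K2_coK2E : K2_coK2 =2 two_pairs true false.
Proof. by do 2![case=> [[|[|[|[|i]]]] //= ?]]. Qed.

Lemma coK4E : coK4 =2 two_pairs false false.
Proof. by do 2![case=> [[|[|[|[|i]]]] //= ?]]. Qed.

Section Hopping.
Variables (T : finType) (e : rel T).

Definition anticomplete_pairs : Prop := exists a b c d : T,
  [/\ uniq [:: a; b; c; d], ~~ e a c, ~~ e a d, ~~ e b c & ~~ e b d].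

Lemma chron_list_fresh_forcers blue used s :
  chron_list e blue used s -> all (fun x => x.1 \notin used) s && uniq (map fst s).
Proof.
elim: s blue used => [|[v w] s IHs] blue used //=.
case/andP=> /and4P[_ v_unused _ _] /IHs /andP[/allP s_fresh ->].
rewrite v_unused andbT; apply/andP; split.
- by apply/allP=> x /s_fresh; rewrite in_setU1 negb_or => /andP[].
- by apply/mapP=> -[x /s_fresh + v_eq]; rewrite -v_eq in_setU1 eqxx.
Qed.

Lemma set_of_forces_functional B F v w1 w2 :
  is_set_of_forces e B F -> (v, w1) \in F -> (v, w2) \in F -> w1 = w2.
Proof.
case=> s [/chron_list_fresh_forcers/andP[_ uniq_s] ->]; rewrite !inE.
elim: s uniq_s => [|[a b] s IHs] //= /andP[a_notin uniq_s]; rewrite !in_cons.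
case/orP=> [/eqP[va ->]|vw1_s]; case/orP=> [/eqP[va' ->]|vw2_s] //.
- by case/negP: a_notin; rewrite -va (map_f fst vw2_s).
- by case/negP: a_notin; rewrite -va' (map_f fst vw1_s).
- exact: IHs.
Qed.

Lemma card_U_succ B F t : is_set_of_forces e B F -> ~ anticomplete_pairs ->
  #|U e B F t.+1| <= #|U e B F t|.+1.
Proof.
move=> FB no_pairs /=; set Ut := U e B F t.
rewrite cardsU -addn1 (leq_trans (leq_subr _ _)) // leq_add2l leqNgt.
apply/negP=> /card_gt1P[w1 [w2 [+ + w12]]]; rewrite !inE.
move=> /andP[w1_new /existsP[v1 /and3P[F1 v1_blue v1_nbhd]]].
move=> /andP[w2_new /existsP[v2 /and3P[F2 v2_blue v2_nbhd]]].
have blue_neq v w : v \in Ut -> w \notin Ut -> v != w.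
  by move=> v_blue; apply: contra => /eqP <-.
have nonadj v w : [forall (u | e v u), u \in Ut] -> w \notin Ut -> ~~ e v w.
  by move=> /forall_inP v_nbhd; apply: contra => /v_nbhd.
have v12 : v1 != v2.
  apply: contraNneq w12 => v12; rewrite v12 in F1.
  exact/eqP/(set_of_forces_functional FB F1).
apply: no_pairs; exists v1, v2, w1, w2.
by rewrite /= !inE !negb_or v12 w12 !blue_neq //; split=> //; apply: nonadj.
Qed.

Lemma card_U_le B F t : is_set_of_forces e B F -> ~ anticomplete_pairs ->
  #|U e B F t| <= #|B| + t.
Proof.
move=> FB no_pairs; elim: t => [|t IHt]; first by rewrite addn0.
by rewrite addnS (leq_trans (card_U_succ t FB no_pairs)).
Qed.

Lemma th_H_le k : th_achievable e k -> th_H e <= k.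
Proof.
move=> ach_k; rewrite /th_H; case: ex_minnP => m _; apply.
by rewrite /th_achievableb; case: excluded_middle_informative.
Qed.

Lemma th_H_achievable : th_achievable e (th_H e).
Proof.
rewrite /th_H; case: ex_minnP => m.
by rewrite /th_achievableb; case: excluded_middle_informative.
Qed.

Lemma no_force_from_full used : ~~ [exists v, exists w, can_force e [set: T] used v w].
Proof. by apply/existsP=> -[v /existsP[w /and4P[_ _]]]; rewrite inE. Qed.

Lemma th_achievable_card : th_achievable e #|T|.
Proof.
exists [set: T], set0, 0; split; last by rewrite cardsT addn0.
by exists [::]; split; [exact: no_force_from_full | apply/setP=> x; rewrite !inE].
Qed.

Lemma card_le_th_H : ~ anticomplete_pairs -> #|T| <= th_H e.
Proof.
move=> no_pairs; have [B [F [t [FB [U_full ->]]]]] := th_H_achievable.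
by rewrite -cardsT -U_full card_U_le.
Qed.

Lemma anticomplete_pairs_th_H_lt : anticomplete_pairs -> th_H e < #|T|.
Proof.
move=> [a [b [c [d [abcd eac ead ebc ebd]]]]].
move: abcd; rewrite /= !inE !negb_or => /and4P[/and3P[ab ac ad] /andP[bc bd] cd _].
set B := [set: T] :\ c :\ d.
have inB u : (u \in B) = (u != d) && (u != c) by rewrite !inE andbT.
have nbhd_B v : ~~ e v c -> ~~ e v d -> [forall (u | e v u), u \in B].
  move=> vc vd; apply/forall_inP=> u vu; rewrite inB.
  by apply/andP; split; apply/eqP=> uE; [move: vd | move: vc]; rewrite -uE vu.
have B_full : d |: (c |: B) = [set: T].
  by apply/setP=> u; rewrite !inE; case: eqP; case: eqP.
have card_B : #|T| = #|B| + 2.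
  rewrite -cardsT (cardsD1 c) (cardsD1 d ([set: T] :\ c)) !inE (eq_sym d) cd.
  by rewrite addnA addnC.
rewrite card_B (@leq_ltn_trans (#|B| + 1)) ?ltn_add2l //; apply: th_H_le.
exists B, [set x in [:: (a, c); (b, d)]], 1; split; last split => //.
- exists [:: (a, c); (b, d)]; split => //.
  rewrite /is_chron_list /= B_full no_force_from_full andbT /can_force.
  rewrite !inB !inE ad ac bd bc !eqxx /= !orbF !orbT !andbF.
  rewrite (eq_sym b a) ab (eq_sym d c) cd nbhd_B //=.
  apply/forall_inP=> u /(forall_inP (nbhd_B b ebc ebd)) uB.
  by rewrite inE uB orbT.
- apply/setP=> w; rewrite /= in_setT in_setU inE.
  case: (boolP (w \in B)) => //= wB; apply/existsP.
  move: wB; rewrite inB negb_and !negbK => /orP[/eqP-> | /eqP->].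
  + by exists b; rewrite !inE eqxx orbT bd bc nbhd_B.
  + by exists a; rewrite !inE eqxx ad ac nbhd_B.
Qed.

Lemma has_induced_eq (H H' : rel 'I_4) :
  H =2 H' -> has_induced e H -> has_induced e H'.
Proof. by move=> eqH [f [f_inj f_e]]; exists f; split=> // x y; rewrite f_e eqH. Qed.

Lemma anticomplete_pairs_of_induced p q :
  has_induced e (two_pairs p q) -> anticomplete_pairs.
Proof.
case=> f [f_inj f_e].
exists (f (inord 0)), (f (inord 1)), (f (inord 2)), (f (inord 3)).
by rewrite !f_e /two_pairs /= !inE !(inj_eq f_inj) -!val_eqE /= !inordK.
Qed.

Section Symmetric.
Hypotheses (e_sym : symmetric e) (e_irr : irreflexive e).

Lemma has_induced_quadruple a b c d :
  uniq [:: a; b; c; d] -> ~~ e a c -> ~~ e a d -> ~~ e b c -> ~~ e b d ->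
  has_induced e (two_pairs (e a b) (e c d)).
Proof.
move=> abcd /negPf eac /negPf ead /negPf ebc /negPf ebd.
exists (fun i : 'I_4 => nth a [:: a; b; c; d] i); split.
  by move=> x y /eqP; rewrite nth_uniq // => /eqP /val_inj.
by do 2![case=> [[|[|[|[|i]]]] //= ?]];
  rewrite ?e_irr // (e_sym b a, e_sym c a, e_sym d a, e_sym c b, e_sym d b, e_sym d c).
Qed.

Lemma forbidden_of_anticomplete_pairs : anticomplete_pairs ->
  has_induced e twoK2 \/ has_induced e K2_coK2 \/ has_induced e coK4.
Proof.
case=> a [b [c [d [abcd eac ead ebc ebd]]]].
wlog cd_ab : a b c d abcd eac ead ebc ebd / e c d ==> e a b.
  move=> main; case: (boolP (e c d ==> e a b)); first exact: main.
  rewrite negb_imply => /andP[ecd _]; apply: (main c d a b); rewrite 1?e_sym //.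
  - by rewrite -(rot_uniq 2).
  - by rewrite ecd implybT.
have := has_induced_quadruple abcd eac ead ebc ebd.
case: (e a b) cd_ab; case: (e c d) => // _ ind.
- by left; apply: (has_induced_eq _ ind) => x y; rewrite twoK2E.
- by right; left; apply: (has_induced_eq _ ind) => x y; rewrite K2_coK2E.
- by right; right; apply: (has_induced_eq _ ind) => x y; rewrite coK4E.
Qed.

End Symmetric.

Lemma anticomplete_pairs_of_forbidden :
  has_induced e twoK2 \/ has_induced e K2_coK2 \/ has_induced e coK4 ->
  anticomplete_pairs.
Proof.
case=> [/(has_induced_eq twoK2E) |
        [/(has_induced_eq K2_coK2E) | /(has_induced_eq coK4E)]];
  exact: anticomplete_pairs_of_induced.
Qed.

End Hopping.

Theorem mainTheorem16 (T : finType) (e : rel T)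
  (e_sym : symmetric e) (e_irr : irreflexive e) :
  th_H e = #|T| <->
  ~ (has_induced e twoK2 \/ has_induced e K2_coK2 \/ has_induced e coK4).
Proof.
split=> [th_card /anticomplete_pairs_of_forbidden | no_forbidden].
  by move/anticomplete_pairs_th_H_lt; rewrite th_card ltnn.
apply/eqP; rewrite eqn_leq (th_H_le (th_achievable_card e)) /=.
by apply: card_le_th_H => /(forbidden_of_anticomplete_pairs e_sym e_irr).
Qed.
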